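(* In the setting described in the context, fix $R\in\Gamma$. Then for every $t\in[0,p|R|r^2]$, \[\mathbb{P}\Big\{\big|\|X_{R'}\|_{2\to2}^2-p\|X_R\|_{2\to2}^2\big|\ge t\Big\}\le (3d+3)\exp\Big(-\frac{t^2}{48p|R|r^4}\Big).\]
   Context: Let $X=\{x_i\}_{i\in[n]}$ be points in $\mathbb{R}^d$ and $\Gamma$ a partition of $[n]$ into $k$ nonempty sets. For nonempty $S\subseteq[n]$, $c_S:=\frac1{|S|}\sum_{i\in S}x_i$, and $X_S$ denotes the $d\times n$ matrix whose $i$-th column is $x_i-c_S$ if $i\in S$ and $0$ otherwise. Let $r:=\max_{S\in\Gamma}\max_{i\in S}\|x_i-c_S\|$. Let $p\in(0,1]$ and let $W\subseteq[n]$ be random, containing each index independently with probability $p$; for $S\in\Gamma$ put $S':=S\cap W$ (so $X_{R'}$ has columns $x_i-c_{R'}$ for $i\in R'$ and zero otherwise; it is undefined when $R'=\emptyset$). *)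

From HB Require Import structures.
From mathcomp Require Import all_boot all_order all_algebra.
From mathcomp Require Import classical_sets boolp reals.
From mathcomp Require Import ereal topology normedtype sequences exp.
Set Implicit Arguments. Unset Strict Implicit. Unset Printing Implicit Defensive.
Import Order.TTheory GRing.Theory Num.Theory.
Local Open Scope ring_scope.
Local Open Scope classical_set_scope.

Section Defs.
Variable R : realType.

Definition eucl_norm (m : nat) (v : 'cV[R]_m) : R := Num.sqrt (\sum_(a < m) v a 0 ^+ 2).

Definition op_norm22 (m k : nat) (A : 'M[R]_(m, k)) : R :=
  sup [set eucl_norm (A *m v) | v in [set v : 'cV[R]_k | eucl_norm v <= 1]].

Variables (d n : nat) (x : 'I_n -> 'cV[R]_d).

Definition centroid (S : {set 'I_n}) : 'cV[R]_d :=
  (#|S|%:R)^-1 *: \sum_(i in S) x i.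

Definition Xmat (S : {set 'I_n}) : 'M[R]_(d, n) :=
  \matrix_(a < d, i < n) (if i \in S then (x i - centroid S) a 0 else 0).

Definition cluster_radius (Gamma : {set {set 'I_n}}) : R :=
  \big[Num.max/0]_(S in Gamma) \big[Num.max/0]_(i in S) eucl_norm (x i - centroid S).
End Defs.

(* Probability that the random subset W of 'I_n (each index included
   independently with probability p) satisfies the event E *)
Definition bernoulli_prob (R : realType) (n : nat) (p : R) (E : pred {set 'I_n}) : R :=
  \sum_(W : {set 'I_n} | E W) p ^+ #|W| * (1 - p) ^+ (n - #|W|).

(* Write [Y_i = x_i - c_R] and [m = |R'|].  For a unit vector [u],
     [||X_{R'}^T u||^2 - p ||X_R^T u||^2 = <G, u u^T> - m <c_{R'} - c_R, u>^2]
   with [G = sum_{i in R} (1[i in W] - p) Y_i Y_i^T], while [m (c_{R'} - c_R)] is the centred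
   sum [S = sum_{i in R} (1[i in W] - p) Y_i].  Since [X] and [X^T] have the same operator norm,
   the deviation is at most [||G||_F + ||S||^2 / m]; so a deviation [>= t] forces
   [||G||_F >= t/2], or [||S||^2 >= p |R| t / 4], or [|m - p |R|| >= p |R| / 2].
   Each is a tail event of a centred Bernoulli sum of matrices.  In Frobenius norm such sums obey
   Pinelis' bound [E cosh (lam ||v + S||) <= cosh (lam ||v||) prod_i (1 + 2 lam^2 p ||Z_i||^2)]
   for [lam ||Z_i|| <= 1/2], proved one coordinate at a time from an elementary inequality for
   [cosh]; Markov's inequality then gives the dimension-free tail
   [P (||S|| >= alpha) <= 2 exp (- alpha^2 / (8 V))] when [p sum_i ||Z_i||^2 <= V] and
   [alpha ||Z_i|| <= 2 V].
   The three tails add up to [6 exp (- t^2 / (48 p |R| r^4))], and [6 <= 3 d + 3]. *)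

From HB Require Import structures.
From mathcomp Require Import all_boot all_order all_algebra.
From mathcomp Require Import reals.
From mathcomp Require Import ereal topology normedtype sequences exp.
From mathcomp Require Import ring lra.
Import Order.TTheory GRing.Theory Num.Theory.
Local Open Scope ring_scope.
Set Implicit Arguments. Unset Strict Implicit. Unset Printing Implicit Defensive.

Section Hyperbolic.
Variable R : realType.
Implicit Types a c s w z : R.

Definition cosh z := (expR z + expR (- z)) / 2.
Definition sinh z := (expR z - expR (- z)) / 2.

Lemma cosh_gt0 z : 0 < cosh z.
Proof. by rewrite divr_gt0 // addr_gt0 // expR_gt0. Qed.

Lemma cosh0 : cosh 0 = 1 :> R.
Proof. by rewrite /cosh oppr0 expR0; field. Qed.

Lemma expR_le_cosh z : expR z <= 2 * cosh z.
Proof. by have := expR_gt0 (- z); rewrite /cosh; lra. Qed.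

Lemma sinh_le a : 0 <= a -> sinh a <= 2 * a * cosh a.
Proof.
move=> a_ge0; rewrite /cosh /sinh.
have -> : expR (- a) = expR a * expR (- (a + a)) by rewrite -expRD; congr expR; ring.
have tangent : 0 <= expR a * (expR (- (a + a)) - (1 - (a + a))).
  by rewrite mulr_ge0 ?expR_ge0 // subr_ge0 expR_ge1Dx.
have aexp_ge0 : 0 <= a * (expR a * expR (- (a + a))) by rewrite !mulr_ge0 ?expR_ge0.
lra.
Qed.

Lemma expR_le_quadratic z : `|z| <= 1/2 -> expR z <= 1 + z + 2 * z ^+ 2.
Proof.
rewrite ler_norml => /andP[z_ge z_le].
(* [expR z * expR (- z) = 1] and [1 - z <= expR (- z)] give [expR z <= 1 / (1 - z)]. *)
have := expR_ge1Dx (- z); have := expR_gt0 z.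
have : expR z * expR (- z) = 1 by rewrite -expRD subrr expR0.
nra.
Qed.

Lemma cosh_perturb a c s w : 0 <= a -> 0 <= c -> `|w| <= s -> s <= 1/2 ->
  c ^+ 2 = a ^+ 2 + 2 * a * w + s ^+ 2 ->
  cosh c <= (1 + 2 * s ^+ 2) * cosh a + w * sinh a.
Proof.
move=> a_ge0 c_ge0; rewrite ler_norml => /andP[w_ge w_le] s_le c2E.
set e := c - a.
have e_le : e <= s by rewrite /e; nra.
have e_ge : - s <= e by rewrite /e; nra.
have Ee : expR c = expR a * expR e by rewrite -expRD /e; congr expR; ring.
have ENe : expR (- c) = expR (- a) * expR (- e) by rewrite -expRD /e; congr expR; ring.
have quad_e : expR e <= 1 + e + 2 * e ^+ 2 by apply: expR_le_quadratic; rewrite ler_norml; lra.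
have quad_Ne : expR (- e) <= 1 - e + 2 * e ^+ 2.
  by rewrite -[e ^+ 2]sqrrN; apply: expR_le_quadratic; rewrite normrN ler_norml; lra.
have cosh_c : cosh c <= (1 + 2 * e ^+ 2) * cosh a + e * sinh a.
  rewrite /cosh /sinh Ee ENe; have := expR_gt0 a; have := expR_gt0 (- a); nra.
have eE : 2 * a * (e - w) = s ^+ 2 - e ^+ 2 by move: c2E; rewrite /e; nra.
have se_ge0 : 0 <= s ^+ 2 - e ^+ 2 by nra.
have sinh_term : (e - w) * sinh a <= (s ^+ 2 - e ^+ 2) * cosh a.
  have [->|a_neq0] := eqVneq a 0.
    by rewrite /sinh oppr0 subrr mul0r mulr0 mulr_ge0 // ltW // cosh_gt0.
  have a_gt0 : 0 < a by rewrite lt_def a_neq0.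
  rewrite -(ler_pM2l (_ : 0 < 2 * a)) ?mulr_gt0 // mulrA eE.
  have := ler_wpM2l se_ge0 (sinh_le a_ge0); lra.
have := cosh_gt0 a; nra.
Qed.

End Hyperbolic.

Section Frobenius.
Variables (R : realType) (m k : nat).
Implicit Types (A B C : 'M[R]_(m, k)) (c : R).

Definition mxdot A B := \sum_i \sum_j A i j * B i j.
Definition mxnorm2 A := mxdot A A.
Definition mxnorm A := Num.sqrt (mxnorm2 A).

Lemma mxdotC A B : mxdot A B = mxdot B A.
Proof. by apply: eq_bigr => i _; apply: eq_bigr => j _; rewrite mulrC. Qed.

Lemma mxdotDl A B C : mxdot (A + B) C = mxdot A C + mxdot B C.
Proof.
rewrite /mxdot -big_split; apply: eq_bigr => i _.
by rewrite -big_split; apply: eq_bigr => j _; rewrite !mxE mulrDl.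
Qed.

Lemma mxdotZl c A B : mxdot (c *: A) B = c * mxdot A B.
Proof.
rewrite /mxdot mulr_sumr; apply: eq_bigr => i _.
by rewrite mulr_sumr; apply: eq_bigr => j _; rewrite !mxE mulrA.
Qed.

Lemma mxdotDr A B C : mxdot A (B + C) = mxdot A B + mxdot A C.
Proof. by rewrite mxdotC mxdotDl ![mxdot _ A]mxdotC. Qed.

Lemma mxdotZr c A B : mxdot A (c *: B) = c * mxdot A B.
Proof. by rewrite mxdotC mxdotZl mxdotC. Qed.

Lemma mxdot0l B : mxdot 0 B = 0.
Proof. by rewrite -(scale0r 0) mxdotZl mul0r. Qed.

Lemma mxdotBl A B C : mxdot (A - B) C = mxdot A C - mxdot B C.
Proof. by rewrite mxdotDl -scaleN1r mxdotZl mulN1r. Qed.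

Lemma mxdot_suml (I : finType) (P : pred I) (F : I -> 'M[R]_(m, k)) B :
  mxdot (\sum_(i | P i) F i) B = \sum_(i | P i) mxdot (F i) B.
Proof. exact: (big_morph (mxdot^~ B) (fun A1 A2 => mxdotDl A1 A2 B) (mxdot0l B)). Qed.

Lemma mxnorm2_ge0 A : 0 <= mxnorm2 A.
Proof. by apply: sumr_ge0 => i _; apply: sumr_ge0 => j _; rewrite -expr2 sqr_ge0. Qed.

Lemma mxnorm2_eq0 A : mxnorm2 A = 0 -> A = 0.
Proof.
have sqr_ge0' (a : R) : 0 <= a * a by rewrite -expr2 sqr_ge0.
move=> /(psumr_eq0P (fun i _ => sumr_ge0 _ (fun j _ => sqr_ge0' (A i j)))) rowA0.
apply/matrixP => i j; rewrite mxE.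
have /(psumr_eq0P (fun j _ => sqr_ge0' (A i j)))/(_ j isT) := rowA0 i isT.
by move/eqP; rewrite mulf_eq0 orbb => /eqP.
Qed.

Lemma mxnorm2_addZ A B c :
  mxnorm2 (A + c *: B) = mxnorm2 A + 2 * c * mxdot A B + c ^+ 2 * mxnorm2 B.
Proof. by rewrite /mxnorm2 mxdotDl !mxdotDr !mxdotZl !mxdotZr [mxdot B A]mxdotC; ring. Qed.

Lemma mxnorm2Z c A : mxnorm2 (c *: A) = c ^+ 2 * mxnorm2 A.
Proof. by rewrite /mxnorm2 mxdotZl mxdotZr mulrA -expr2. Qed.

Lemma mxdot_sqr_le A B : mxdot A B ^+ 2 <= mxnorm2 A * mxnorm2 B.
Proof.
have [/mxnorm2_eq0 ->|B_neq0] := eqVneq (mxnorm2 B) 0.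
  by rewrite mxdotC /mxnorm2 !mxdot0l expr0n mulr0.
have B_gt0 : 0 < mxnorm2 B by rewrite lt_def B_neq0 mxnorm2_ge0.
have := mxnorm2_ge0 (A + (- (mxdot A B / mxnorm2 B)) *: B).
rewrite mxnorm2_addZ; set q := mxdot A B; set b := mxnorm2 B.
have -> : mxnorm2 A + 2 * - (q / b) * q + (- (q / b)) ^+ 2 * b = mxnorm2 A - q ^+ 2 / b.
  by field; rewrite B_neq0.
by rewrite subr_ge0 ler_pdivrMr.
Qed.

Lemma mxnorm_ge0 A : 0 <= mxnorm A.
Proof. exact: sqrtr_ge0. Qed.

Lemma mxnorm_sqr A : mxnorm A ^+ 2 = mxnorm2 A.
Proof. exact/sqr_sqrtr/mxnorm2_ge0. Qed.

Lemma mxnorm0 : mxnorm 0 = 0.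
Proof. by rewrite /mxnorm /mxnorm2 mxdot0l sqrtr0. Qed.

Lemma mxnorm2_le1 A : mxnorm A <= 1 -> mxnorm2 A <= 1.
Proof. by move=> A_le1; rewrite -mxnorm_sqr exprn_ile1 ?mxnorm_ge0. Qed.

Lemma mxnormZ c A : mxnorm (c *: A) = `|c| * mxnorm A.
Proof. by rewrite /mxnorm mxnorm2Z sqrtrM ?sqr_ge0 // sqrtr_sqr. Qed.

Lemma normr_mxdot_le A B : `|mxdot A B| <= mxnorm A * mxnorm B.
Proof.
rewrite -(ler_pXn2r (_ : 0 < 2)%N) ?nnegrE ?mulr_ge0 ?mxnorm_ge0 //.
by rewrite real_normK ?num_real // exprMn !mxnorm_sqr mxdot_sqr_le.
Qed.

End Frobenius.

Section CoshMxnorm.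
Variables (R : realType) (m k : nat).
Implicit Types (v Z : 'M[R]_(m, k)) (lam th p : R).

(* For [v = 0] the quotient below is [0], and so is [mxdot v Z]. *)
Lemma cosh_mxnorm_shift lam th v Z : 0 <= lam -> lam * `|th| * mxnorm Z <= 1/2 ->
  cosh (lam * mxnorm (v + th *: Z))
  <= (1 + 2 * (lam * `|th| * mxnorm Z) ^+ 2) * cosh (lam * mxnorm v)
     + th * (lam * mxdot v Z / mxnorm v) * sinh (lam * mxnorm v).
Proof.
move=> lam_ge0 s_le; apply: cosh_perturb => //; rewrite ?mulr_ge0 ?mxnorm_ge0 //.
  have -> : lam * `|th| * mxnorm Z = `|th| * (lam * mxnorm Z) by ring.
  rewrite normrM ler_wpM2l //.
  have [->|v_neq0] := eqVneq (mxnorm v) 0.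
    by rewrite invr0 mulr0 normr0 mulr_ge0 ?mxnorm_ge0.
  have v_gt0 : 0 < mxnorm v by rewrite lt_def v_neq0 mxnorm_ge0.
  rewrite normrM normfV normrM (ger0_norm lam_ge0) (ger0_norm (ltW v_gt0)).
  by rewrite ler_pdivrMr // -mulrA ler_wpM2l // mulrC normr_mxdot_le.
have vZ : mxnorm v * (mxdot v Z / mxnorm v) = mxdot v Z.
  have [v0|v_neq0] := eqVneq (mxnorm v) 0; last by rewrite mulrC divfK.
  have := normr_mxdot_le v Z; rewrite v0 mul0r normr_le0 => /eqP ->.
  by rewrite !mul0r.
rewrite !exprMn !mxnorm_sqr mxnorm2_addZ real_normK ?num_real //.
have -> : 2 * (lam * mxnorm v) * (th * (lam * mxdot v Z / mxnorm v))
  = 2 * lam ^+ 2 * th * (mxnorm v * (mxdot v Z / mxnorm v)) by ring.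
by rewrite vZ; ring.
Qed.

Lemma cosh_mxnorm_two_point p lam v Z : 0 <= p <= 1 -> 0 <= lam -> lam * mxnorm Z <= 1/2 ->
  p * cosh (lam * mxnorm (v + (1 - p) *: Z)) + (1 - p) * cosh (lam * mxnorm (v - p *: Z))
  <= (1 + 2 * lam ^+ 2 * p * mxnorm2 Z) * cosh (lam * mxnorm v).
Proof.
move=> /andP[p_ge0 p_le1] lam_ge0 Z_le.
have q_ge0 : 0 <= 1 - p by rewrite subr_ge0.
have lamZ_ge0 : 0 <= lam * mxnorm Z by rewrite mulr_ge0 ?mxnorm_ge0.
have := ler_wpM2l p_ge0 (@cosh_mxnorm_shift lam (1 - p) v Z lam_ge0 _).
rewrite ger0_norm // => /(_ ltac:(nra)).
have := ler_wpM2l q_ge0 (@cosh_mxnorm_shift lam (- p) v Z lam_ge0 _).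
rewrite normrN ger0_norm // scaleNr => /(_ ltac:(nra)).
have := cosh_gt0 (lam * mxnorm v); rewrite -[mxnorm2 Z]mxnorm_sqr.
set C := cosh _; set S := sinh _; set w := lam * _ / _; set z := mxnorm Z.
move=> C_gt0 shift2 shift1; apply: le_trans (lerD shift1 shift2) _.
(* The first-order terms cancel and the second-order ones sum to
   [2 * lam ^+ 2 * p * (1 - p) * z ^+ 2 * C]. *)
rewrite -subr_ge0; set lhs := (X in 0 <= X).
have -> : lhs = 2 * p ^+ 2 * (lam ^+ 2 * z ^+ 2 * C) by rewrite /lhs; ring.
have := mulr_ge0 (mulr_ge0 (sqr_ge0 lam) (sqr_ge0 z)) (ltW C_gt0); have := sqr_ge0 p; nra.
Qed.

End CoshMxnorm.

Section OperatorNorm.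
Variable R : realType.

Lemma mxdot_cV m (u v : 'cV[R]_m) : mxdot u v = \sum_i u i 0 * v i 0.
Proof. by apply: eq_bigr => i _; rewrite big_ord1. Qed.

Lemma eucl_normE m (v : 'cV[R]_m) : eucl_norm v = mxnorm v.
Proof. by rewrite /eucl_norm /mxnorm /mxnorm2 mxdot_cV; under eq_bigr do rewrite expr2. Qed.

Lemma mxdot_mulmx m k (M : 'M[R]_(m, k)) (u : 'cV[R]_k) (v : 'cV[R]_m) :
  mxdot (M *m u) v = mxdot u (M^T *m v).
Proof.
rewrite !mxdot_cV; under eq_bigr do rewrite mxE mulr_suml.
rewrite exchange_big /=; apply: eq_bigr => j _.
by rewrite mxE mulr_sumr; apply: eq_bigr => i _; rewrite mxE; ring.
Qed.

Lemma mxdot_outer m (u v : 'cV[R]_m) : mxdot (u *m u^T) (v *m v^T) = mxdot u v ^+ 2.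
Proof.
rewrite !mxdot_cV expr2 big_distrlr /=; apply: eq_bigr => i _; apply: eq_bigr => j _.
by rewrite !mxE !big_ord1 !mxE; ring.
Qed.

Lemma mxnorm_outer m (u : 'cV[R]_m) : mxnorm (u *m u^T) = mxnorm2 u.
Proof. by rewrite /mxnorm {1}/mxnorm2 mxdot_outer sqrtr_sqr ger0_norm ?mxnorm2_ge0. Qed.

Lemma mxnorm_mulmx_le m k (M : 'M[R]_(m, k)) (v : 'cV[R]_k) :
  mxnorm (M *m v) <= mxnorm M * mxnorm v.
Proof.
rewrite /mxnorm -sqrtrM ?mxnorm2_ge0 // ler_sqrt ?mulr_ge0 ?mxnorm2_ge0 //.
rewrite {1}/mxnorm2 mxdot_cV {1}/mxnorm2 /mxdot mulr_suml; apply: ler_sum => i _.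
have := mxdot_sqr_le (row i M)^T v.
have -> : mxdot (row i M)^T v = (M *m v) i 0.
  by rewrite mxdot_cV mxE; apply: eq_bigr => j _; rewrite !mxE.
have -> : mxnorm2 (row i M)^T = \sum_j M i j * M i j.
  by rewrite /mxnorm2 mxdot_cV; apply: eq_bigr => j _; rewrite !mxE.
by rewrite expr2.
Qed.

Lemma op_norm22_ub m k (M : 'M[R]_(m, k)) (v : 'cV[R]_k) :
  mxnorm v <= 1 -> mxnorm (M *m v) <= op_norm22 M.
Proof.
move=> v_le1; apply: ub_le_sup; last by exists v; rewrite /= ?eucl_normE.
exists (mxnorm M) => _ [w /= w_le1 <-]; rewrite !eucl_normE in w_le1 *.
apply: le_trans (mxnorm_mulmx_le M w) _.
by rewrite -[leRHS]mulr1 ler_wpM2l ?mxnorm_ge0.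
Qed.

Lemma op_norm22_le m k (M : 'M[R]_(m, k)) b :
  (forall v : 'cV[R]_k, mxnorm v <= 1 -> mxnorm (M *m v) <= b) -> op_norm22 M <= b.
Proof.
move=> Mb; apply: ge_sup.
  by exists (eucl_norm (M *m 0)), 0; rewrite //= eucl_normE mxnorm0.
by move=> _ [v /= v_le1 <-]; rewrite eucl_normE; apply: Mb; rewrite -eucl_normE.
Qed.

Lemma op_norm22_ge0 m k (M : 'M[R]_(m, k)) : 0 <= op_norm22 M.
Proof. by have := @op_norm22_ub _ _ M 0; rewrite mulmx0 !mxnorm0; apply; rewrite ler01. Qed.

Lemma op_norm22_le_trmx m k (M : 'M[R]_(m, k)) : op_norm22 M <= op_norm22 M^T.
Proof.
apply: op_norm22_le => v v_le1.
have [->|Mv_neq0] := eqVneq (mxnorm (M *m v)) 0; first exact: op_norm22_ge0.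
have Mv_gt0 : 0 < mxnorm (M *m v) by rewrite lt_def Mv_neq0 mxnorm_ge0.
(* Test [M^T] against the unit vector [u] in the direction of [M *m v]. *)
set u := (mxnorm (M *m v))^-1 *: (M *m v).
have u_le1 : mxnorm u <= 1 by rewrite mxnormZ ger0_norm ?invr_ge0 ?mxnorm_ge0 // mulVf.
apply: le_trans (op_norm22_ub M^T u_le1).
have -> : mxnorm (M *m v) = mxdot v (M^T *m u).
  rewrite -scalemxAr mxdotZr -mxdot_mulmx -/(mxnorm2 _) -mxnorm_sqr.
  by rewrite expr2 mulrA mulVf ?mul1r.
apply: le_trans (ler_norm _) _; apply: le_trans (normr_mxdot_le _ _) _.
by rewrite -[leRHS]mul1r ler_wpM2r ?mxnorm_ge0.
Qed.

Lemma op_norm22_trmx m k (M : 'M[R]_(m, k)) : op_norm22 M^T = op_norm22 M.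
Proof.
have := op_norm22_le_trmx M^T; rewrite trmxK => le_MT.
by apply/le_anti; rewrite le_MT op_norm22_le_trmx.
Qed.

Lemma mxnorm2_mulmx_le_op m k (M : 'M[R]_(m, k)) (v : 'cV[R]_k) :
  mxnorm v <= 1 -> mxnorm2 (M *m v) <= op_norm22 M ^+ 2.
Proof.
move=> v_le1; rewrite -mxnorm_sqr.
by rewrite ler_pXn2r ?nnegrE ?mxnorm_ge0 ?op_norm22_ge0 ?op_norm22_ub.
Qed.

Lemma op_norm22_sqr_le m k (M : 'M[R]_(m, k)) b :
  (forall v : 'cV[R]_k, mxnorm v <= 1 -> mxnorm2 (M *m v) <= b) -> op_norm22 M ^+ 2 <= b.
Proof.
move=> Mb; have b_ge0 : 0 <= b.
  by have := Mb 0; rewrite mulmx0 -mxnorm_sqr !mxnorm0 expr2 mul0r; apply; exact: ler01.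
rewrite -(sqr_sqrtr b_ge0) ler_pXn2r ?nnegrE ?op_norm22_ge0 ?sqrtr_ge0 //.
by apply: op_norm22_le => v v_le1; rewrite /mxnorm ler_sqrt // Mb.
Qed.

End OperatorNorm.

Section BernoulliSubset.
Variables (R : realType) (n : nat) (p : R).
Hypotheses (p_ge0 : 0 <= p) (p_le1 : p <= 1).
Implicit Types (W J : {set 'I_n}) (f g : {set 'I_n} -> R) (E : pred {set 'I_n}) (i : 'I_n).

Definition bernoulli_weight W := p ^+ #|W| * (1 - p) ^+ (n - #|W|).
Definition bernoulli_expect f := \sum_W bernoulli_weight W * f W.

Lemma bernoulli_weight_ge0 W : 0 <= bernoulli_weight W.
Proof. by rewrite mulr_ge0 // exprn_ge0 // subr_ge0. Qed.

Lemma ler_bernoulli_expect f g : (forall W, f W <= g W) ->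
  bernoulli_expect f <= bernoulli_expect g.
Proof. by move=> fg; apply: ler_sum => W _; rewrite ler_wpM2l ?bernoulli_weight_ge0. Qed.

Lemma bernoulli_expectZl c f : bernoulli_expect (fun W => c * f W) = c * bernoulli_expect f.
Proof. by rewrite /bernoulli_expect mulr_sumr; apply: eq_bigr => W _; rewrite mulrCA. Qed.

Lemma bernoulli_expect1 : bernoulli_expect (fun=> 1) = 1.
Proof.
rewrite /bernoulli_expect (partition_big (fun W => inord #|W| : 'I_n.+1) predT) //=.
rewrite -[RHS](expr1n _ n) -[X in X ^+ n](subrK p 1) exprDn; apply: eq_bigr => i _.
rewrite (eq_bigl (fun W => #|W| == i)); last first.
  move=> W /=; apply/eqP/eqP => [<-|->]; last exact: inord_val.
  by rewrite inordK // ltnS -[X in (_ <= X)%N]card_ord max_card.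
rewrite (eq_bigr (fun=> p ^+ i * (1 - p) ^+ (n - i))); last first.
  by move=> W /eqP cardW; rewrite /bernoulli_weight mulr1 cardW.
rewrite sumr_const mulrC; congr (_ *+ _).
by rewrite -[X in 'C(X, _)]card_ord -card_draws; apply: eq_card => W; rewrite !inE.
Qed.

Lemma bernoulli_probE E : bernoulli_prob p E = bernoulli_expect (fun W => (E W)%:R).
Proof.
rewrite /bernoulli_prob /bernoulli_expect big_mkcond /=; apply: eq_bigr => W _.
by case: (E W); rewrite ?mulr1 ?mulr0.
Qed.

Lemma bernoulli_prob_le1 E : bernoulli_prob p E <= 1.
Proof.
rewrite bernoulli_probE -[leRHS]bernoulli_expect1.
by apply: ler_bernoulli_expect => W; case: (E W).
Qed.

Lemma bernoulli_prob_subU E E1 E2 : (forall W, E W -> E1 W || E2 W) ->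
  bernoulli_prob p E <= bernoulli_prob p E1 + bernoulli_prob p E2.
Proof.
move=> sub; rewrite !bernoulli_probE /bernoulli_expect -big_split /=.
apply: ler_sum => W _; rewrite -mulrDr ler_wpM2l ?bernoulli_weight_ge0 //.
case: (E W) (sub W) => [/(_ isT)|_]; case: (E1 W); case: (E2 W) => //=; lra.
Qed.

Lemma sum_set_pairs (F : {set 'I_n} -> R) i :
  \sum_(W : {set 'I_n}) F W = \sum_(W : {set 'I_n} | i \notin W) (F W + F (i |: W)).
Proof.
rewrite (bigID (fun W => i \in W)) /= addrC big_split /=; congr (_ + _).
rewrite (reindex_onto (fun W => i |: W) (fun W => W :\ i)) /=; last first.
  by move=> W iW; rewrite setD1K.
apply: eq_bigl => W; rewrite setU11 /=.
have [iW|iNW] := boolP (i \in W); last by rewrite setU1K ?eqxx.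
by apply/negbTE/eqP => WE; move: iW; rewrite -WE setD11.
Qed.

Lemma bernoulli_weight_setU1 W i : i \notin W ->
  exists2 c, bernoulli_weight W = (1 - p) * c & bernoulli_weight (i |: W) = p * c.
Proof.
move=> iNW; have cardU : #|i |: W| = #|W|.+1 by rewrite cardsU1 iNW.
have card_lt : (#|W| < n)%N by rewrite -cardU -[X in (_ <= X)%N]card_ord max_card.
exists (p ^+ #|W| * (1 - p) ^+ (n - #|W|.+1)).
  by rewrite /bernoulli_weight -(subnSK card_lt) exprS mulrCA.
by rewrite /bernoulli_weight cardU exprS mulrA.
Qed.

Lemma bernoulli_expect_cond f i :
  bernoulli_expect f = bernoulli_expect (fun W => p * f (i |: W) + (1 - p) * f (W :\ i)).
Proof.
rewrite /bernoulli_expect (sum_set_pairs _ i) [RHS](sum_set_pairs _ i).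
apply: eq_bigr => W iNW; have [c -> ->] := bernoulli_weight_setU1 iNW.
have WDi : W :\ i = W by apply/setDidPl; rewrite disjoint_sym disjoints1.
by rewrite setU1K // setUA setUid WDi; ring.
Qed.

Definition centered_sum a b J (Z : 'I_n -> 'M[R]_(a, b)) W :=
  \sum_(i in J) ((i \in W)%:R - p) *: Z i.

Lemma centered_sumD1 a b J (Z : 'I_n -> 'M[R]_(a, b)) W i : i \in J ->
  centered_sum J Z W = ((i \in W)%:R - p) *: Z i + centered_sum (J :\ i) Z W.
Proof.
move=> iJ; rewrite /centered_sum (bigD1 i) //=; congr (_ + _).
by apply: eq_bigl => j; rewrite in_setD1 andbC.
Qed.

Lemma eq_centered_sum a b J (Z : 'I_n -> 'M[R]_(a, b)) W1 W2 :
  {in J, W1 =i W2} -> centered_sum J Z W1 = centered_sum J Z W2.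
Proof. by move=> W12; apply: eq_bigr => j /W12 ->. Qed.

Lemma mxnorm_centered_count J W :
  mxnorm (centered_sum J (fun=> 1 : 'M[R]_1) W) = `|#|J :&: W|%:R - p * #|J|%:R|.
Proof.
rewrite /mxnorm /mxnorm2 /mxdot !big_ord1 -expr2 sqrtr_sqr; congr `|_|.
rewrite /centered_sum summxE; under eq_bigr do rewrite !mxE mulr1.
rewrite sumrB sumr_const mulr_natr (big_setID W) /=; congr (_ - _).
rewrite [X in _ + X]big1 => [|i]; last by rewrite inE => /andP[/negbTE ->].
rewrite addr0 (eq_bigr (fun=> 1)) => [|i]; last by rewrite inE => /andP[_ ->].
by rewrite sumr_const.
Qed.

End BernoulliSubset.

Section CenteredSumTail.
Variables (R : realType) (n : nat) (p : R).
Hypotheses (p_ge0 : 0 <= p) (p_le1 : p <= 1).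
Variables (a b : nat) (Z : 'I_n -> 'M[R]_(a, b)).
Implicit Types (J : {set 'I_n}) (v : 'M[R]_(a, b)) (lam : R).

Lemma expect_cosh_centered_sum_le lam J v : 0 <= lam ->
  (forall i, i \in J -> lam * mxnorm (Z i) <= 1/2) ->
  bernoulli_expect p (fun W => cosh (lam * mxnorm (v + centered_sum p J Z W)))
  <= \prod_(i in J) (1 + 2 * lam ^+ 2 * p * mxnorm2 (Z i)) * cosh (lam * mxnorm v).
Proof.
move=> lam_ge0; move: {2}#|J| (erefl #|J|) => k.
elim: k J v => [|k IHk] J v cardJ Z_le.
  apply: (@le_trans _ _ (bernoulli_expect p (fun=> cosh (lam * mxnorm v) * 1))).
    apply: ler_bernoulli_expect => // W.
    by rewrite /centered_sum (cards0_eq cardJ) big_set0 addr0 mulr1.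
  by rewrite bernoulli_expectZl bernoulli_expect1 (cards0_eq cardJ) big_set0 mulr1 mul1r.
have [i iJ] : exists i, i \in J by apply/card_gt0P; rewrite cardJ.
have cardJi : #|J :\ i| = k by move: cardJ; rewrite (cardsD1 i J) iJ add1n => -[].
have Z_le' j : j \in J :\ i -> lam * mxnorm (Z j) <= 1/2 by rewrite in_setD1 => /andP[_ /Z_le].
have S_U1 W : centered_sum p (J :\ i) Z (i |: W) = centered_sum p (J :\ i) Z W.
  by apply: eq_centered_sum => j; rewrite in_setD1 in_setU1 => /andP[/negbTE ->].
have S_D1 W : centered_sum p (J :\ i) Z (W :\ i) = centered_sum p (J :\ i) Z W.
  by apply: eq_centered_sum => j; rewrite !in_setD1 => /andP[->].
set c := 1 + 2 * lam ^+ 2 * p * mxnorm2 (Z i).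
have c_ge0 : 0 <= c by rewrite addr_ge0 // !mulr_ge0 ?sqr_ge0 ?mxnorm2_ge0.
(* Condition on [i \in W] and apply the two-point bound at [v + centered_sum p (J :\ i) Z W]. *)
rewrite (bernoulli_expect_cond _ _ i) (big_setD1 i iJ) /= -/c -[leRHS]mulrA.
apply: (le_trans _ (ler_wpM2l c_ge0 (IHk _ v cardJi Z_le'))); rewrite -bernoulli_expectZl.
apply: ler_bernoulli_expect => // W.
rewrite !(centered_sumD1 _ _ _ iJ) setU11 setD11 S_U1 S_D1 /= mulr1n sub0r scaleNr.
rewrite (addrCA v) (addrC _ (v + _)) (addrCA v) (addrC _ (v + _)).
by apply: cosh_mxnorm_two_point; rewrite ?p_ge0 ?p_le1 ?Z_le.
Qed.

Lemma centered_sum_tail_exp lam J alpha : 0 <= lam ->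
  (forall i, i \in J -> lam * mxnorm (Z i) <= 1/2) ->
  bernoulli_prob p (fun W => alpha <= mxnorm (centered_sum p J Z W))
  <= 2 * expR (- (lam * alpha) + 2 * lam ^+ 2 * p * \sum_(i in J) mxnorm2 (Z i)).
Proof.
move=> lam_ge0 lamZ_le.
(* Markov's inequality for [cosh (lam * mxnorm S)], which dominates [expR (lam * mxnorm S) / 2]. *)
rewrite bernoulli_probE.
apply: le_trans (@ler_bernoulli_expect _ _ _ p_ge0 p_le1 _
  (fun W => 2 * expR (- (lam * alpha)) * cosh (lam * mxnorm (0 + centered_sum p J Z W))) _) _.
  move=> W; rewrite add0r; set S := centered_sum p J Z W.
  have [alpha_le|_] /= := boolP (alpha <= mxnorm S).
    2: by rewrite !mulr_ge0 ?expR_ge0 // ltW ?cosh_gt0.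
  have : expR (lam * alpha) <= expR (lam * mxnorm S) by rewrite ler_expR ler_wpM2l.
  have := expR_le_cosh (lam * mxnorm S).
  have : expR (- (lam * alpha)) * expR (lam * alpha) = 1 by rewrite -expRD addNr expR0.
  have := expR_gt0 (- (lam * alpha)); nra.
rewrite bernoulli_expectZl.
apply: le_trans (ler_wpM2l _ (expect_cosh_centered_sum_le _ lam_ge0 lamZ_le)) _.
  by rewrite mulr_ge0 ?expR_ge0.
rewrite mxnorm0 mulr0 cosh0 mulr1 -[leLHS]mulrA expRD ler_pM2l // ler_pM2l ?expR_gt0 //.
rewrite mulr_sumr expR_sum; apply: ler_prod => i _; rewrite expR_ge1Dx andbT.
by have := mulr_ge0 p_ge0 (mxnorm2_ge0 (Z i)); have := sqr_ge0 lam; nra.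
Qed.

Lemma centered_sum_tail J alpha V : 0 <= alpha -> 0 < V ->
  p * \sum_(i in J) mxnorm2 (Z i) <= V ->
  (forall i, i \in J -> alpha * mxnorm (Z i) <= 2 * V) ->
  bernoulli_prob p (fun W => alpha <= mxnorm (centered_sum p J Z W))
  <= 2 * expR (- (alpha ^+ 2 / (8 * V))).
Proof.
move=> alpha_ge0 V_gt0 var_le Z_le.
(* This [lam] minimizes [- lam * alpha + 2 * lam ^+ 2 * V]. *)
pose lam := alpha / (4 * V).
have lam_ge0 : 0 <= lam by rewrite divr_ge0 // ltW // mulr_gt0.
have lamZ_le i : i \in J -> lam * mxnorm (Z i) <= 1/2.
  by move=> /Z_le; rewrite /lam mulrAC ler_pdivrMr ?mulr_gt0 //; lra.
apply: le_trans (centered_sum_tail_exp alpha lam_ge0 lamZ_le) _.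
rewrite ler_pM2l // ler_expR -mulrA.
have -> : - (alpha ^+ 2 / (8 * V)) = - (lam * alpha) + 2 * lam ^+ 2 * V.
  by rewrite /lam; field; rewrite gt_eqF.
by rewrite lerD2l ler_wpM2l // mulr_ge0 ?sqr_ge0.
Qed.

End CenteredSumTail.

Section ClusterDeviation.
Variables (R : realType) (d n : nat) (x : 'I_n -> 'cV[R]_d).
Implicit Types (S T W : {set 'I_n}) (u : 'cV[R]_d).

Lemma sum_sub_centroid_self S : \sum_(i in S) (x i - centroid x S) = 0.
Proof.
have [/cards0_eq ->|S_gt0] := posnP #|S|; first by rewrite big_set0.
rewrite sumrB sumr_const -scaler_nat /centroid scalerA mulfV ?scale1r ?subrr //.
by rewrite pnatr_eq0 -lt0n.
Qed.

Lemma sum_sub_centroid S T :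
  \sum_(i in S) (x i - centroid x T) = #|S|%:R *: (centroid x S - centroid x T).
Proof.
have split_dev i : x i - centroid x T = (x i - centroid x S) + (centroid x S - centroid x T).
  by rewrite addrA subrK.
under eq_bigr do rewrite split_dev.
by rewrite big_split /= sum_sub_centroid_self add0r sumr_const scaler_nat.
Qed.

Lemma mxnorm2_trXmat_mul S u :
  mxnorm2 ((Xmat x S)^T *m u) = \sum_(i in S) mxdot (x i - centroid x S) u ^+ 2.
Proof.
rewrite /mxnorm2 mxdot_cV [RHS]big_mkcond /=; apply: eq_bigr => i _.
rewrite mxE; under eq_bigr do rewrite !mxE.
case: ifP => iS; last by rewrite big1 ?mul0r // => a _; rewrite mul0r.
by rewrite mxdot_cV expr2; congr (_ * _); apply: eq_bigr => a _; rewrite !mxE.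
Qed.

Variables (Rs : {set 'I_n}) (p : R).

Definition dev i := x i - centroid x Rs.
Definition cov_fluct W := centered_sum p Rs (fun i => dev i *m (dev i)^T) W.
Definition mean_fluct W := centered_sum p Rs dev W.

Lemma mean_fluctE W :
  mean_fluct W = #|Rs :&: W|%:R *: (centroid x (Rs :&: W) - centroid x Rs).
Proof.
rewrite /mean_fluct /centered_sum; under eq_bigr do rewrite scalerBl.
rewrite sumrB -scaler_sumr sum_sub_centroid_self scaler0 subr0 -sum_sub_centroid.
rewrite big_mkcond [RHS]big_mkcond; apply: eq_bigr => i _; rewrite in_setI.
by case: (i \in Rs); case: (i \in W); rewrite /= ?scale1r ?scale0r.
Qed.

Lemma trXmat_quadratic_dev W u :
  mxnorm2 ((Xmat x (Rs :&: W))^T *m u) - p * mxnorm2 ((Xmat x Rs)^T *m u)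
  = mxdot (cov_fluct W) (u *m u^T)
    - #|Rs :&: W|%:R * mxdot (centroid x (Rs :&: W) - centroid x Rs) u ^+ 2.
Proof.
set e := mxdot (centroid x (Rs :&: W) - centroid x Rs) u.
have dev_sub i : mxdot (x i - centroid x (Rs :&: W)) u = mxdot (dev i) u - e.
  by rewrite /e -mxdotBl /dev opprB addrA subrK.
have sum_dev : \sum_(i in Rs :&: W) mxdot (dev i) u = #|Rs :&: W|%:R * e.
  by rewrite -mxdot_suml /dev sum_sub_centroid mxdotZl.
have cov_form : mxdot (cov_fluct W) (u *m u^T)
    = \sum_(i in Rs :&: W) mxdot (dev i) u ^+ 2 - p * \sum_(i in Rs) mxdot (dev i) u ^+ 2.
  rewrite /cov_fluct /centered_sum mxdot_suml.
  under eq_bigr do rewrite mxdotZl mxdot_outer mulrBl.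
  rewrite sumrB -mulr_sumr; congr (_ - _).
  rewrite big_mkcond [RHS]big_mkcond; apply: eq_bigr => i _; rewrite in_setI.
  by case: (i \in Rs); case: (i \in W); rewrite /= ?mul1r ?mul0r.
rewrite !mxnorm2_trXmat_mul cov_form; under eq_bigr do rewrite dev_sub.
rewrite (eq_bigr (fun i => mxdot (dev i) u ^+ 2 - (2 * e) * mxdot (dev i) u + e ^+ 2));
  last by move=> i _; ring.
rewrite big_split sumrB /= -mulr_sumr sumr_const sum_dev -mulr_natl.
have -> : \sum_(i in Rs) mxdot (x i - centroid x Rs) u ^+ 2
  = \sum_(i in Rs) mxdot (dev i) u ^+ 2 by [].
ring.
Qed.

Lemma cov_fluct_form_le W u : mxnorm u <= 1 ->
  `|mxdot (cov_fluct W) (u *m u^T)| <= mxnorm (cov_fluct W).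
Proof.
move=> /mxnorm2_le1 u_le1; apply: le_trans (normr_mxdot_le _ _) _.
by rewrite mxnorm_outer -[leRHS]mulr1 ler_wpM2l ?mxnorm_ge0.
Qed.

Lemma centroid_shift_form_le W u : mxnorm u <= 1 ->
  #|Rs :&: W|%:R * mxdot (centroid x (Rs :&: W) - centroid x Rs) u ^+ 2
  <= mxnorm2 (mean_fluct W) / #|Rs :&: W|%:R.
Proof.
move=> /mxnorm2_le1 u_le1; rewrite mean_fluctE mxnorm2Z.
have [->|m_gt0] := posnP #|Rs :&: W|; first by rewrite mulr0n mul0r invr0 mulr0.
rewrite ler_pdivlMr ?ltr0n // mulrAC -expr2 ler_wpM2l ?sqr_ge0 //.
apply: le_trans (mxdot_sqr_le _ _) _.
by rewrite -[leRHS]mulr1 ler_wpM2l ?mxnorm2_ge0.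
Qed.

Hypothesis p_gt0 : 0 < p.

Lemma op_norm22_Xmat_dev W :
  `|op_norm22 (Xmat x (Rs :&: W)) ^+ 2 - p * op_norm22 (Xmat x Rs) ^+ 2|
  <= mxnorm (cov_fluct W) + mxnorm2 (mean_fluct W) / #|Rs :&: W|%:R.
Proof.
rewrite -(op_norm22_trmx (Xmat x (Rs :&: W))) -(op_norm22_trmx (Xmat x Rs)).
set K := op_norm22 (Xmat x (Rs :&: W))^T; set L := op_norm22 (Xmat x Rs)^T.
set G := mxnorm (cov_fluct W); set E := mxnorm2 (mean_fluct W) / _.
have E_ge0 : 0 <= E by rewrite divr_ge0 ?mxnorm2_ge0.
have upper : K ^+ 2 <= p * L ^+ 2 + G.
  apply: op_norm22_sqr_le => u u_le1.
  have := trXmat_quadratic_dev W u.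
  have := cov_fluct_form_le W u_le1; rewrite ler_norml => /andP[_].
  have := ler_wpM2l (ltW p_gt0) (mxnorm2_mulmx_le_op (Xmat x Rs)^T u_le1).
  have := mulr_ge0 (ler0n _ #|Rs :&: W|)
    (sqr_ge0 (mxdot (centroid x (Rs :&: W) - centroid x Rs) u)).
  rewrite -/L -/G; lra.
have lower : p * L ^+ 2 <= K ^+ 2 + G + E.
  rewrite mulrC -ler_pdivlMr //; apply: op_norm22_sqr_le => u u_le1.
  rewrite ler_pdivlMr // mulrC.
  have := trXmat_quadratic_dev W u.
  have := cov_fluct_form_le W u_le1; rewrite ler_norml => /andP[+ _].
  have := mxnorm2_mulmx_le_op (Xmat x (Rs :&: W))^T u_le1.
  have := centroid_shift_form_le W u_le1.
  rewrite -/K -/G -/E; lra.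
by rewrite ler_norml; apply/andP; split; lra.
Qed.

End ClusterDeviation.

Section ClusterDeviationTail.
Variables (R : realType) (d n : nat) (x : 'I_n -> 'cV[R]_d) (Rs : {set 'I_n}) (p r t : R).
Hypotheses (p_gt0 : 0 < p) (p_le1 : p <= 1) (t_gt0 : 0 < t).
Hypothesis t_le : t <= p * #|Rs|%:R * r ^+ 2.
Hypothesis dev_le : forall i, i \in Rs -> mxnorm (dev x Rs i) <= r.

Local Notation N := (#|Rs|%:R : R).
Local Notation T := (t ^+ 2 / (48%:R * p * N * r ^+ 4)).

Let p_ge0 : 0 <= p := ltW p_gt0.
Let pNr2_gt0 : 0 < p * N * r ^+ 2 := lt_le_trans t_gt0 t_le.

Let N_gt0 : 0 < N.
Proof.
by rewrite lt0r ler0n andbT; apply: contraTneq pNr2_gt0 => ->; rewrite mulr0 mul0r ltxx.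
Qed.

Let r_neq0 : r != 0.
Proof. by apply: contraTneq pNr2_gt0 => ->; rewrite expr0n mulr0 ltxx. Qed.

Let r2_gt0 : 0 < r ^+ 2.
Proof. by rewrite lt0r sqr_ge0 andbT sqrf_eq0. Qed.

Let r4E : r ^+ 4 = (r ^+ 2) ^+ 2.
Proof. by rewrite -exprM. Qed.

Let t_div_le1 : t / (p * N * r ^+ 2) <= 1.
Proof. by rewrite ler_pdivrMr // mul1r. Qed.

Let t_div_ge0 : 0 <= t / (p * N * r ^+ 2).
Proof. by rewrite divr_ge0 // ltW. Qed.

Let dev2_le i : i \in Rs -> mxnorm2 (dev x Rs i) <= r ^+ 2.
Proof.
move=> iRs; rewrite -mxnorm_sqr lerXn2r ?nnegrE ?mxnorm_ge0 ?dev_le //.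
exact: le_trans (mxnorm_ge0 _) (dev_le iRs).
Qed.

Let sum_le_card (F : 'I_n -> R) c :
  (forall i, i \in Rs -> F i <= c) -> \sum_(i in Rs) F i <= N * c.
Proof. by move=> Fc; apply: le_trans (ler_sum _ Fc) _; rewrite sumr_const mulr_natl. Qed.

Lemma Xmat_dev_events W :
  t <= `|op_norm22 (Xmat x (Rs :&: W)) ^+ 2 - p * op_norm22 (Xmat x Rs) ^+ 2| ->
  [|| t / 2 <= mxnorm (cov_fluct x Rs p W),
      Num.sqrt (p * N * t / 4) <= mxnorm (mean_fluct x Rs p W)
    | p * N / 2 <= mxnorm (centered_sum p Rs (fun=> 1 : 'M[R]_1) W)].
Proof.
move=> /le_trans/(_ (op_norm22_Xmat_dev x Rs p_gt0 W)) dev_ge.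
have [//|cov_lt] /= := leP (t / 2) (mxnorm (cov_fluct x Rs p W)).
set m := (#|Rs :&: W|%:R : R) in dev_ge *.
have mean_gt : t / 2 < mxnorm2 (mean_fluct x Rs p W) / m by lra.
have m_gt0 : 0 < m.
  rewrite lt_def ler0n andbT; apply: contraTneq mean_gt => ->.
  by rewrite invr0 mulr0 -leNgt divr_ge0 ?ltW.
rewrite mxnorm_centered_count; have [m_le|m_gt] := leP m (p * N / 2).
  by apply/orP; right; rewrite ler_normr -/m; apply/orP; right; lra.
apply/orP; left; rewrite /mxnorm ler_sqrt ?mxnorm2_ge0 //.
move: mean_gt; rewrite ltr_pdivlMr // => mean_gt.
have := ler_wpM2l (_ : 0 <= t / 2) (ltW m_gt); rewrite divr_ge0 ?(ltW t_gt0) //; lra.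
Qed.

Lemma cov_fluct_tail :
  bernoulli_prob p (fun W => t / 2 <= mxnorm (cov_fluct x Rs p W)) <= 2 * expR (- T).
Proof.
have V_gt0 : 0 < p * N * r ^+ 4 by rewrite r4E; do 2 apply: mulr_gt0 => //; exact: exprn_gt0.
apply: le_trans (centered_sum_tail p_ge0 p_le1 _ V_gt0 _ _) _.
- by rewrite divr_ge0 ?(ltW t_gt0).
- rewrite -mulrA ler_wpM2l //; apply: sum_le_card => i iRs.
  by rewrite -mxnorm_sqr mxnorm_outer r4E lerXn2r ?nnegrE ?mxnorm2_ge0 ?sqr_ge0 ?dev2_le.
- move=> i iRs; rewrite mxnorm_outer.
  have := ler_wpM2l (_ : 0 <= t / 2) (dev2_le iRs); rewrite divr_ge0 ?(ltW t_gt0) //.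
  have := ler_wpM2r (sqr_ge0 r) t_le; rewrite r4E in V_gt0 *; nra.
rewrite ler_pM2l // ler_expR lerN2.
have -> : T = t ^+ 2 / (p * N * r ^+ 4) / 48 by field; rewrite r_neq0 !gt_eqF.
have -> : (t / 2) ^+ 2 / (8 * (p * N * r ^+ 4)) = t ^+ 2 / (p * N * r ^+ 4) / 32.
  by field; rewrite r_neq0 !gt_eqF.
have : 0 <= t ^+ 2 / (p * N * r ^+ 4) by rewrite divr_ge0 ?sqr_ge0 ?ltW.
lra.
Qed.

Lemma mean_fluct_tail : bernoulli_prob p
    (fun W => Num.sqrt (p * N * t / 4) <= mxnorm (mean_fluct x Rs p W)) <= 2 * expR (- T).
Proof.
have pNt_ge0 : 0 <= p * N * t / 4 by rewrite divr_ge0 // !mulr_ge0 // ltW.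
have alpha2E : Num.sqrt (p * N * t / 4) ^+ 2 = p * N * t / 4 by rewrite sqr_sqrtr.
apply: le_trans (centered_sum_tail p_ge0 p_le1 (sqrtr_ge0 _) pNr2_gt0 _ _) _.
- by rewrite -mulrA ler_wpM2l //; exact: sum_le_card.
- move=> i iRs; rewrite -(ler_pXn2r (ltn0Sn 1)) ?nnegrE; first last.
  + by rewrite mulr_ge0 // ltW.
  + by rewrite mulr_ge0 ?sqrtr_ge0 ?mxnorm_ge0.
  rewrite exprMn alpha2E mxnorm_sqr.
  have := ler_wpM2l pNt_ge0 (dev2_le iRs).
  have pNr2_ge0 : 0 <= p * N * r ^+ 2 / 4 by rewrite divr_ge0 // ltW.
  have := ler_wpM2r pNr2_ge0 t_le; have := sqr_ge0 (p * N * r ^+ 2); nra.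
rewrite ler_pM2l // ler_expR lerN2 alpha2E.
have -> : T = t / r ^+ 2 * (t / (p * N * r ^+ 2)) / 48 by field; rewrite r_neq0 !gt_eqF.
have -> : p * N * t / 4 / (8 * (p * N * r ^+ 2)) = t / r ^+ 2 / 32.
  by field; rewrite r_neq0 !gt_eqF.
have q_ge0 : 0 <= t / r ^+ 2 by rewrite divr_ge0 ?ltW.
have : 0 <= t / r ^+ 2 * (1 - t / (p * N * r ^+ 2)) by rewrite mulr_ge0 // subr_ge0.
lra.
Qed.

Lemma count_fluct_tail : bernoulli_prob p
    (fun W => p * N / 2 <= mxnorm (centered_sum p Rs (fun=> 1 : 'M[R]_1) W)) <= 2 * expR (- T).
Proof.
have one2 : mxnorm2 (1 : 'M[R]_1) = 1 by rewrite /mxnorm2 /mxdot !big_ord1 mxE mulr1.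
have pN_gt0 : 0 < p * N by rewrite mulr_gt0.
apply: le_trans (centered_sum_tail p_ge0 p_le1 _ pN_gt0 _ _) _.
- by rewrite divr_ge0 ?ltW.
- by under eq_bigr do rewrite one2; rewrite sumr_const.
- by move=> i _; rewrite /mxnorm one2 sqrtr1 mulr1; lra.
rewrite ler_pM2l // ler_expR lerN2.
have -> : T = (t / (p * N * r ^+ 2)) ^+ 2 * (p * N) / 48 by field; rewrite r_neq0 !gt_eqF.
have -> : (p * N / 2) ^+ 2 / (8 * (p * N)) = p * N / 32 by field; rewrite !gt_eqF.
have q2_le1 : (t / (p * N * r ^+ 2)) ^+ 2 <= 1 by rewrite exprn_ile1.
have := ler_wpM2r (ltW pN_gt0) q2_le1; lra.
Qed.

Lemma Xmat_dev_tail : bernoulli_prob p (fun W =>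
    t <= `|op_norm22 (Xmat x (Rs :&: W)) ^+ 2 - p * op_norm22 (Xmat x Rs) ^+ 2|)
  <= 6 * expR (- T).
Proof.
apply: le_trans (bernoulli_prob_subU p_ge0 p_le1 Xmat_dev_events) _.
apply: le_trans (lerD (lexx _) (bernoulli_prob_subU p_ge0 p_le1 (fun W => id))) _.
have := cov_fluct_tail; have := mean_fluct_tail; have := count_fluct_tail; lra.
Qed.

End ClusterDeviationTail.

Section ClusterRadius.
Variable R : realType.

Lemma eucl_norm_le_cluster_radius d n (x : 'I_n -> 'cV[R]_d) (Gamma : {set {set 'I_n}})
    S i :
  S \in Gamma -> i \in S -> eucl_norm (x i - centroid x S) <= cluster_radius x Gamma.
Proof.
move=> SG iS; apply: le_trans (le_bigmax_cond _ _ SG).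
exact: (le_bigmax_cond _ _ iS).
Qed.

Lemma cluster_radius_cV0 n (x : 'I_n -> 'cV[R]_0) (Gamma : {set {set 'I_n}}) :
  cluster_radius x Gamma = 0.
Proof.
rewrite /cluster_radius; apply: (big_ind (fun v => v = 0)) => // [a b -> ->|S _].
  exact: maxxx.
apply: (big_ind (fun v => v = 0)) => // [a b -> ->|i _]; first exact: maxxx.
by rewrite /eucl_norm big_ord0 sqrtr0.
Qed.

End ClusterRadius.

Theorem lemma13 (R : realType) (d n : nat) (x : 'I_n -> 'cV[R]_d)
  (Gamma : {set {set 'I_n}}) (Rs : {set 'I_n}) (p t : R) :
  partition Gamma [set: 'I_n] ->
  Rs \in Gamma ->
  0 < p -> p <= 1 ->
  0 <= t -> t <= p * #|Rs|%:R * cluster_radius x Gamma ^+ 2 ->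
  bernoulli_prob p (fun W : {set 'I_n} =>
      t <= `| op_norm22 (Xmat x (Rs :&: W)) ^+ 2 - p * op_norm22 (Xmat x Rs) ^+ 2 |)
  <= (3 * d.+1)%:R * expR (- (t ^+ 2 / (48%:R * p * #|Rs|%:R * cluster_radius x Gamma ^+ 4))).
Proof.
move=> _ Rs_in p_gt0 p_le1 t_ge0 t_le.
have [t0|t_neq0] := eqVneq t 0.
  rewrite t0 expr0n /= mul0r oppr0 expR0 mulr1.
  by apply: le_trans (bernoulli_prob_le1 (ltW p_gt0) p_le1 _) _; rewrite ler1n muln_gt0.
have t_gt0 : 0 < t by rewrite lt_def t_neq0.
have d_gt0 : (0 < d)%N.
  move: x t_le; case: d => // x; rewrite cluster_radius_cV0 expr0n mulr0.
  by move=> /(lt_le_trans t_gt0); rewrite ltxx.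
apply: le_trans (Xmat_dev_tail p_gt0 p_le1 t_gt0 t_le _) _.
  by move=> i iRs; rewrite -eucl_normE; exact: eucl_norm_le_cluster_radius.
by rewrite ler_wpM2r ?expR_ge0 // ler_nat (_ : 6 = 3 * 2)%N // leq_mul2l /= ltnS.
Qed.
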